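(* Let $\mathbb{F}$ be an algebraically closed field. Let $A_1,\dots,A_4,B_1,\dots,B_4\in M(2)$ satisfy the Standing Hypothesis, and suppose $A_1=\begin{pmatrix}a_1&1\\0&a_1\end{pmatrix}$ and $B_1=\begin{pmatrix}b_1&0\\0&b_4\end{pmatrix}$ for some $a_1,b_1,b_4\in\mathbb{F}$. Then $\mathrm{tr}(A_1A_2A_3A_4)=\mathrm{tr}(B_1B_2B_3B_4)$.
   Context: $M(2)$ is the space of $2\times 2$ matrices over $\mathbb{F}$. Standing Hypothesis: $\mathrm{tr}(A_i)=\mathrm{tr}(B_i)$ and $\det(A_i)=\det(B_i)$ for $1\le i\le 4$; $\mathrm{tr}(A_iA_j)=\mathrm{tr}(B_iB_j)$ for $1\le i<j\le 4$; $\mathrm{tr}(A_iA_jA_k)=\mathrm{tr}(B_iB_jB_k)$ for $1\le i<j<k\le 4$. *)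

From HB Require Import structures.
From mathcomp Require Import all_boot all_order all_algebra.
Set Implicit Arguments. Unset Strict Implicit. Unset Printing Implicit Defensive.
Import GRing.Theory.
Local Open Scope ring_scope.

(* Standing Hypothesis for 4-tuples of 2x2 matrices (indices 1..4 as 'I_4). *)
Definition standing_hyp (F : fieldType) (A B : 'I_4 -> 'M[F]_2) : Prop :=
  (forall i, \tr (A i) = \tr (B i) /\ \det (A i) = \det (B i)) /\
  (forall i j : 'I_4, (i < j)%N -> \tr (A i * A j) = \tr (B i * B j)) /\
  (forall i j k : 'I_4, (i < j)%N -> (j < k)%N ->
     \tr (A i * A j * A k) = \tr (B i * B j * B k)).

Definition mx2 (F : fieldType) (a b c d : F) : 'M[F]_2 :=
  \matrix_(i < 2, j < 2)
    if (i == 0 :> nat) then (if (j == 0 :> nat) then a else b)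
    else (if (j == 0 :> nat) then c else d).

From HB Require Import structures.
From mathcomp Require Import all_boot all_order all_algebra.
From mathcomp Require Import ring.
Import GRing.Theory.
Local Open Scope ring_scope.

(* A_1 is a Jordan block and B_1 is diagonal with the same trace and
   determinant, so B_1 has the double eigenvalue a_1 and is the scalar a_1.
   Since tr (A_1 M) = a_1 tr M + M_21 while tr (a_1 M) = a_1 tr M, the pair
   conditions tr (A_1 A_j) = tr (B_1 B_j) force A_j to be upper triangular for
   j > 1.  Hence so is A_2 A_3 A_4, and
   tr (A_1 A_2 A_3 A_4) = a_1 tr (A_2 A_3 A_4) = a_1 tr (B_2 B_3 B_4)
   = tr (B_1 B_2 B_3 B_4). *)

Lemma sum_prod_eq_double {R : idomainType} (a x y : R) :
  x + y = a + a -> x * y = a * a -> x = a /\ y = a.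
Proof.
move=> sum_xy prod_xy.
have : (x - a) * (y - a) = 0.
  have -> : (x - a) * (y - a) = x * y - a * (x + y) + a * a by ring.
  by rewrite prod_xy sum_xy; ring.
move/eqP; rewrite mulf_eq0 !subr_eq0 => /orP[/eqP xa | /eqP ya].
  by split=> //; apply: (@addrI _ x); rewrite sum_xy xa.
by split=> //; apply: (@addIr _ y); rewrite sum_xy ya.
Qed.

Section TwoByTwo.
Variable R : comPzRingType.
Implicit Types M N : 'M[R]_2.

Lemma mxtrace2 M : \tr M = M 0 0 + M 1 1.
Proof.
rewrite /mxtrace !big_ord_recl big_ord0 addr0.
by congr (M _ _ + M _ _); apply/val_inj.
Qed.

Lemma mulmx2E M N i j : (M * N) i j = M i 0 * N 0 j + M i 1 * N 1 j.
Proof.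
rewrite -mulmxE mxE !big_ord_recl big_ord0 addr0.
by congr (M _ _ * N _ _ + M _ _ * N _ _); apply/val_inj.
Qed.

Lemma det_mx2 M : \det M = M 0 0 * M 1 1 - M 0 1 * M 1 0.
Proof.
rewrite (expand_det_row _ 0) !big_ord_recl big_ord0 addr0 /cofactor !det_mx11 !mxE /=.
have -> : lift (0 : 'I_2) (0 : 'I_1) = 1 by apply/val_inj.
have -> : lift (1 : 'I_2) (0 : 'I_1) = 0 by apply/val_inj.
by rewrite expr0 expr1 !mul1r mulN1r mulrN.
Qed.

Lemma mul_upper_triangular2 M N : M 1 0 = 0 -> N 1 0 = 0 -> (M * N) 1 0 = 0.
Proof. by move=> M10 N10; rewrite mulmx2E M10 N10 mul0r mulr0 addr0. Qed.

End TwoByTwo.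

Lemma mxtrace_scalar_mul (R : comPzRingType) n (a : R) (M : 'M[R]_n) :
  \tr (a%:M * M) = a * \tr M.
Proof. by rewrite -mulmxE mul_scalar_mx mxtraceZ. Qed.

Section Mx2.
Context {F : fieldType}.
Implicit Types (a b c d : F) (M N : 'M[F]_2).

Lemma mx2E a b c d : let M := mx2 a b c d in
  [/\ M 0 0 = a, M 0 1 = b, M 1 0 = c & M 1 1 = d].
Proof. by rewrite /mx2 !mxE. Qed.

Lemma mx2_scalar a : mx2 a 0 0 a = a%:M.
Proof. by apply/matrixP=> -[[|[|//]] ?] [[|[|//]] ?]; rewrite /mx2 !mxE. Qed.

Lemma mxtrace_jordan2_mul a M : \tr (mx2 a 1 0 a * M) = a * \tr M + M 1 0.
Proof. by rewrite !mxtrace2 !mulmx2E; have [-> -> -> ->] := mx2E a 1 0 a; ring. Qed.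

Lemma diag_mx2_eq_scalar a b1 b4 :
  \tr (mx2 a 1 0 a) = \tr (mx2 b1 0 0 b4) ->
  \det (mx2 a 1 0 a) = \det (mx2 b1 0 0 b4) -> mx2 b1 0 0 b4 = a%:M.
Proof.
rewrite !mxtrace2 !det_mx2; have [-> -> -> ->] := mx2E a 1 0 a.
have [-> -> -> ->] := mx2E b1 0 0 b4; rewrite mulr0 mul0r !subr0 => tr_eq det_eq.
by have [-> ->] := sum_prod_eq_double _ _ _ (esym tr_eq) (esym det_eq); apply: mx2_scalar.
Qed.

Lemma jordan2_mxtrace_lower_left a M N :
  \tr M = \tr N -> \tr (mx2 a 1 0 a * M) = \tr (a%:M * N) -> M 1 0 = 0.
Proof.
rewrite mxtrace_jordan2_mul mxtrace_scalar_mul => -> /eqP.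
by rewrite -subr_eq0 addrAC subrr add0r => /eqP.
Qed.

End Mx2.

Theorem lemma6 (F : closedFieldType) (A B : 'I_4 -> 'M[F]_2) (a1 b1 b4 : F) :
  standing_hyp A B ->
  A (@Ordinal 4 0 isT) = mx2 a1 1 0 a1 ->
  B (@Ordinal 4 0 isT) = mx2 b1 0 0 b4 ->
  \tr (A (@Ordinal 4 0 isT) * A (@Ordinal 4 1 isT) * A (@Ordinal 4 2 isT) * A (@Ordinal 4 3 isT))
  = \tr (B (@Ordinal 4 0 isT) * B (@Ordinal 4 1 isT) * B (@Ordinal 4 2 isT) * B (@Ordinal 4 3 isT)).
Proof.
move=> [tr_det [tr_pair tr_triple]] A1 B1.
set i1 := @Ordinal 4 0 isT.
have B1_scalar : B i1 = a1%:M.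
  by have [] := tr_det i1; rewrite A1 B1; apply: diag_mx2_eq_scalar.
have A_upper (j : 'I_4) : (0 < j)%N -> A j 1 0 = 0.
  move=> j_gt0; have [trj _] := tr_det j.
  by apply: (jordan2_mxtrace_lower_left a1 (A j) (B j) trj); rewrite -A1 -B1_scalar tr_pair.
rewrite -!mulrA A1 B1_scalar mxtrace_jordan2_mul mxtrace_scalar_mul.
rewrite !mul_upper_triangular2 ?A_upper // addr0 !mulrA.
by rewrite tr_triple.
Qed.
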